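(* Let $C\subset\mathbf{P}^2(\mathbf{C})$ be an irreducible plane curve of type $(d,d-2)$, with singular point $Q$ of multiplicity $d-2$, and let $T(C)=\{(p_1,q_1),\dots,(p_l,q_l)\}$ be its 2-formula. Then: (i) $\sum_{i=1}^l q_i=2\sum_{i=1}^l p_i+2$; (ii) for each $i$, either $p_i=q_i$ or $\min\{p_i,q_i\}$ is even; (iii) there exists $i$ such that $q_i$ is odd.
   Context: A plane curve of type $(d,\nu)$ is a plane curve of degree $d$ whose singular points have maximal multiplicity $\nu$. The 2-formula $T(C)$: choose homogeneous coordinates $(x,y,z)$ with $Q=(0:0:1)$, so that $C$ is given by $F(x,y)z^2+2G(x,y)z+H(x,y)=0$ with $F,G,H$ homogeneous of degrees $d-2,d-1,d$; put $\Delta=G^2-FH$; let $t_1,\dots,t_l\in\mathbf{P}^1$ be all the distinct roots of $F\Delta=0$ and set $(p_i,q_i)=(\mathrm{ord}_{t_i}F,\mathrm{ord}_{t_i}\Delta)$, the multiplicities of $t_i$ as a root of $F$ and of $\Delta$; then $T(C)=\{(p_1,q_1),\dots,(p_l,q_l)\}$. *)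

From HB Require Import structures.
From mathcomp Require Import all_boot all_order all_algebra.
From mathcomp Require Import mpoly.
From mathcomp Require Import complex.
From mathcomp Require Import reals.

Set Implicit Arguments.
Unset Strict Implicit.
Unset Printing Implicit Defensive.

Import Order.TTheory GRing.Theory Num.Theory.
Local Open Scope ring_scope.

Section PlaneCurves.
Variable K : fieldType.

Definition x3 : {mpoly K[3]} := 'X_(@inord 2 0).
Definition y3 : {mpoly K[3]} := 'X_(@inord 2 1).
Definition z3 : {mpoly K[3]} := 'X_(@inord 2 2).

Definition to3 (f : {mpoly K[2]}) : {mpoly K[3]} := f \mPo [tuple x3; y3].

Definition curve_poly (F G H : {mpoly K[2]}) : {mpoly K[3]} :=
  to3 F * z3 ^+ 2 + 2%:R * to3 G * z3 + to3 H.

Definition discr (F G H : {mpoly K[2]}) : {mpoly K[2]} := G ^+ 2 - F * H.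

Definition mirreducible n (P : {mpoly K[n]}) : Prop :=
  (1 < msize P)%N /\
  forall A B : {mpoly K[n]}, P = A * B -> (msize A <= 1)%N \/ (msize B <= 1)%N.

(* points of P^2 are represented by nonzero vectors p : 'I_3 -> K *)
Definition nonzero_vec n (p : 'I_n -> K) : Prop := exists i, p i != 0.

Definition Q0 : 'I_3 -> K := fun i => if val i == 2%N then 1 else 0.

Definition singular_pt (P : {mpoly K[3]}) (p : 'I_3 -> K) : Prop :=
  nonzero_vec p /\ P.@[p] = 0 /\ forall i : 'I_3, (P^`M(i)).@[p] = 0.

Definition mult_at (P : {mpoly K[3]}) (p : 'I_3 -> K) (m : nat) : Prop :=
  (exists a : 'X_{1..3}, mdeg a = m /\ (P^`M[a]).@[p] != 0) /\
  (forall a : 'X_{1..3}, (mdeg a < m)%N -> (P^`M[a]).@[p] = 0).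

Definition curve_type (P : {mpoly K[3]}) (d nu : nat) : Prop :=
  [/\ P \is d.-homog, P != 0,
      (exists p, singular_pt P p /\ mult_at P p nu) &
      forall p m, singular_pt P p -> mult_at P p m -> (m <= nu)%N].

(* points of P^1: nonzero pairs (a,b) up to proportionality *)
Definition ev2 (t : K * K) : 'I_2 -> K := fun i => if val i == 0%N then t.1 else t.2.
Definition nonzero_pt (t : K * K) : Prop := t.1 != 0 \/ t.2 != 0.
Definition same_pt (t s : K * K) : Prop := t.1 * s.2 = s.1 * t.2.

(* the linear form b x - a y vanishing exactly at t = (a:b) *)
Definition lin_at (t : K * K) : {mpoly K[2]} :=
  t.2 *: 'X_(@inord 1 0) - t.1 *: 'X_(@inord 1 1).

Definition mdvd n (A B : {mpoly K[n]}) : Prop := exists C, B = C * A.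

Definition root_ord (f : {mpoly K[2]}) (t : K * K) (k : nat) : Prop :=
  mdvd (lin_at t ^+ k) f /\ ~ mdvd (lin_at t ^+ k.+1) f.

(* T is the 2-formula of the curve F z^2 + 2 G z + H = 0: there is an
   enumeration t_1,...,t_l of the distinct roots in P^1 of F*Delta with
   T = [(ord_{t_i} F, ord_{t_i} Delta)]_i *)
Definition two_formula (F G H : {mpoly K[2]}) (T : seq (nat * nat)) : Prop :=
  exists ts : seq (K * K),
  [/\ size ts = size T,
      forall i, (i < size ts)%N -> nonzero_pt (nth (0, 0) ts i),
      forall i j, (i < size ts)%N -> (j < size ts)%N -> i != j ->
        ~ same_pt (nth (0, 0) ts i) (nth (0, 0) ts j),
      forall t, nonzero_pt t ->
        ((F * discr F G H).@[ev2 t] = 0 <->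
         exists2 i, (i < size ts)%N & same_pt t (nth (0, 0) ts i)) &
      forall i, (i < size ts)%N ->
        root_ord F (nth (0, 0) ts i) (nth (0, 0)%N T i).1 /\
        root_ord (discr F G H) (nth (0, 0) ts i) (nth (0, 0)%N T i).2].

End PlaneCurves.

(* Over an algebraically closed field every binary form is a constant times a
   product of linear forms, so the order of a root [t] is the number of factors
   vanishing at [t], and the orders of all roots add up to the degree.  Applied to
   [F] (degree [d - 2]) and [Delta] (degree [2d - 2]) this gives (i).
   Irreducibility forbids a common root of [F], [G], [H]; so at a root [t] of [F]
   we have [ord_t (F H) = ord_t F], while [ord_t (G^2)] is even, and comparing the
   two orders in [Delta = G^2 - F H] gives (ii).  If all orders of [Delta] were even,
   [Delta] would be a square [S^2], so [F H = (G + S) (G - S)]; distributing the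
   linear factors of [F] between [G + S] and [G - S] factors the curve as
   [(F1 z + a) (F2 z + b)], contradicting irreducibility.  This gives (iii). *)

From HB Require Import structures.
From mathcomp Require Import all_boot all_order all_algebra.
From mathcomp Require Import mpoly.
From mathcomp Require Import complex.
From mathcomp Require Import reals.
From mathcomp Require Import ring zify.

Set Implicit Arguments.
Unset Strict Implicit.
Unset Printing Implicit Defensive.

Import Order.TTheory GRing.Theory Num.Theory.
Local Open Scope ring_scope.

Section BinaryForms.
Variable K : numClosedFieldType.
Local Notation P2 := {mpoly K[2]}.
Implicit Types (p q : {poly K}) (c : K) (s t u : K * K) (W X Y : P2).

(* [dehom f] is [f(X, 1)]; [homog_poly m p] is the inverse on forms of degree [m]. *)
Definition dehom (f : P2) : {poly K} :=
  mmap (@polyC K) (fun i : 'I_2 => if val i == 0%N then 'X else 1) f.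

Lemma dehomB (f g : P2) : dehom (f - g) = dehom f - dehom g.
Proof. exact: raddfB. Qed.
Lemma dehomM (f g : P2) : dehom (f * g) = dehom f * dehom g.
Proof. exact: rmorphM. Qed.
Lemma dehom_sum (I : Type) (r : seq I) (F : I -> P2) :
  dehom (\sum_(i <- r) F i) = \sum_(i <- r) dehom (F i).
Proof. exact: raddf_sum. Qed.
Lemma dehomZ c (f : P2) : dehom (c *: f) = c *: dehom f.
Proof. by rewrite /dehom mmapZ mul_polyC. Qed.
Lemma dehomX (u : 'X_{1..2}) : dehom 'X_[u] = 'X^(u ord0).
Proof. by rewrite /dehom mmapX /mmap1 !big_ord_recl big_ord0 /= expr1n !mulr1. Qed.

Definition mon2 (i j : nat) : 'X_{1..2} :=
  [multinom (if val k == 0%N then i else j) | k < 2].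

Lemma mon2_0 i j : mon2 i j ord0 = i. Proof. by rewrite mnmE. Qed.
Lemma mon2_1 i j : mon2 i j (@inord 1 1) = j. Proof. by rewrite mnmE /= inordK. Qed.

Lemma mdeg_mon2 i j : mdeg (mon2 i j) = (i + j)%N.
Proof. by rewrite mdegE !big_ord_recl big_ord0 !mnmE /= addn0. Qed.

Lemma mdeg2 (u : 'X_{1..2}) : mdeg u = (u ord0 + u (@inord 1 1))%N.
Proof.
rewrite mdegE !big_ord_recl big_ord0 addn0; congr (_ + u _)%N.
by apply/val_inj; rewrite /= inordK.
Qed.

Lemma mon2E (u : 'X_{1..2}) : u = mon2 (u ord0) (mdeg u - u ord0).
Proof.
apply/mnmP=> k; rewrite mnmE mdeg2 addKn; case: k => [[|[|k]] hk] //=.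
- by congr (u _); apply/val_inj.
- by congr (u _); apply/val_inj; rewrite /= inordK.
Qed.

Definition homog_poly (m : nat) p : P2 :=
  \sum_(i < m.+1) p`_i *: 'X_[mon2 i (m - i)].

Lemma homog_poly0 m : homog_poly m 0 = 0.
Proof. by rewrite /homog_poly big1 // => i _; rewrite coef0 scale0r. Qed.
Lemma homog_polyZ m c p : homog_poly m (c *: p) = c *: homog_poly m p.
Proof. by rewrite /homog_poly scaler_sumr; apply: eq_bigr => i _; rewrite coefZ scalerA. Qed.
Lemma homog_poly_sum m (I : Type) (r : seq I) (F : I -> {poly K}) :
  homog_poly m (\sum_(i <- r) F i) = \sum_(i <- r) homog_poly m (F i).
Proof.
elim: r => [|a r IH]; first by rewrite !big_nil homog_poly0.
rewrite !big_cons -IH /homog_poly -big_split.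
by apply: eq_bigr => i _; rewrite coefD scalerDl.
Qed.

Lemma homog_polyXn m k : (k <= m)%N -> homog_poly m 'X^k = 'X_[mon2 k (m - k)].
Proof.
move=> km; rewrite /homog_poly (bigD1 (Ordinal (km : k < m.+1)%N)) //=.
rewrite coefXn eqxx scale1r big1 ?addr0 // => i /eqP hi; rewrite coefXn.
by case: eqP => [e|]; [case: hi; apply/val_inj | rewrite scale0r].
Qed.

Lemma homog_poly_homog m p : homog_poly m p \is m.-homog.
Proof.
apply: rpred_sum => i _; apply: rpredZ; rewrite dhomogX; apply/eqP.
by rewrite [LHS]mdeg_mon2 subnKC // -ltnS.
Qed.

Lemma homog_polyK W m : W \is m.-homog -> homog_poly m (dehom W) = W.
Proof.
move=> hW; rewrite [in RHS](mpolyE W) [W in dehom W](mpolyE W).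
rewrite dehom_sum homog_poly_sum !big_seq; apply: eq_bigr => u hu.
rewrite dehomZ homog_polyZ dehomX; congr (_ *: _).
have du : mdeg u = m by apply: (dhomog_mf hW).
by rewrite homog_polyXn -du ?mdeg2 ?leq_addr // [in RHS](mon2E u) mdeg2.
Qed.

Lemma size_dehom W m : W \is m.-homog -> (size (dehom W) <= m.+1)%N.
Proof.
move=> hW; rewrite (mpolyE W) dehom_sum; apply/leq_sizeP => i hi.
rewrite coef_sum big_seq big1 // => u hu; rewrite dehomZ dehomX coefZ coefXn.
have du : mdeg u = m by apply: (dhomog_mf hW).
case: eqP => [e|]; last by rewrite mulr0.
by move: hi; rewrite e -du mdeg2 ltnNge leq_addr.
Qed.

Lemma dehom_homog_poly m p : (size p <= m.+1)%N -> dehom (homog_poly m p) = p.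
Proof.
move=> sp; rewrite /homog_poly dehom_sum.
transitivity (\sum_(i < m.+1) p`_i *: 'X^i).
  by apply: eq_bigr => i _; rewrite dehomZ dehomX mon2_0.
rewrite -poly_def; apply/polyP => i; rewrite coef_poly.
by case: ltnP => // h; rewrite nth_default // (leq_trans sp h).
Qed.

Lemma dehom_inj (A B : P2) m :
  A \is m.-homog -> B \is m.-homog -> dehom A = dehom B -> A = B.
Proof. by move=> hA hB e; rewrite -(homog_polyK hA) -(homog_polyK hB) e. Qed.

Lemma dehom_eq0 W m : W \is m.-homog -> (dehom W == 0) = (W == 0).
Proof.
move=> hW; apply/eqP/eqP => [e|->]; last by rewrite /dehom raddf0.
by rewrite -(homog_polyK hW) e homog_poly0.
Qed.

Lemma homog0_polyC W : W \is 0.-homog -> W = ((dehom W)`_0)%:MP.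
Proof.
move=> hW; rewrite -{1}(homog_polyK hW) /homog_poly big_ord_recl big_ord0 addr0.
have -> : mon2 0 (0 - 0) = 0%MM by apply/mnmP => k; rewrite !mnmE; case: ifP.
by rewrite mpolyX0 -mul_mpolyC mulr1.
Qed.

Lemma meval2X (u : 'X_{1..2}) t :
  ('X_[u]).@[ev2 t] = t.1 ^+ u ord0 * t.2 ^+ u (@inord 1 1).
Proof.
rewrite mevalX !big_ord_recl big_ord0 mulr1 /ev2 /=; congr (_ * _ ^+ u _).
by apply/val_inj; rewrite /= inordK.
Qed.

Lemma meval_sum n (v : 'I_n -> K) (I : Type) (r : seq I) (F : I -> {mpoly K[n]}) :
  (\sum_(i <- r) F i).@[v] = \sum_(i <- r) (F i).@[v].
Proof. exact: raddf_sum. Qed.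

Lemma meval_dehom W r : W.@[ev2 (r, 1)] = (dehom W).[r].
Proof.
rewrite [in LHS](mpolyE W) [in RHS](mpolyE W) dehom_sum meval_sum horner_sum.
apply: eq_bigr => u _; rewrite mevalZ dehomZ dehomX hornerZ hornerXn meval2X /=.
by rewrite expr1n mulr1.
Qed.

Lemma meval_homogZ W m (c a b : K) : W \is m.-homog ->
  W.@[ev2 (c * a, c * b)] = c ^+ m * W.@[ev2 (a, b)].
Proof.
move=> hW; rewrite [in LHS](mpolyE W) [in RHS](mpolyE W) !meval_sum mulr_sumr.
rewrite !big_seq; apply: eq_bigr => u hu; rewrite !mevalZ !meval2X /=.
have du : mdeg u = m by apply: (dhomog_mf hW).
by rewrite -du mdeg2 !exprMn exprD; ring.
Qed.

Lemma meval_infty W m : W \is m.-homog -> W.@[ev2 (1, 0)] = (dehom W)`_m.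
Proof.
move=> hW; rewrite [in LHS](mpolyE W) [in RHS](mpolyE W) dehom_sum meval_sum.
rewrite coef_sum !big_seq; apply: eq_bigr => u hu.
rewrite mevalZ dehomZ dehomX coefZ coefXn meval2X /= expr1n mul1r.
have : mdeg u = m by apply: (dhomog_mf hW).
rewrite mdeg2 => <-.
case: (u (@inord 1 1)) => [|k]; first by rewrite addn0 eqxx expr0.
by rewrite expr0n /= -{2}(addn0 (u ord0)) eqn_add2l.
Qed.

Lemma exists_meval_neq0 W m : W \is m.-homog -> W != 0 ->
  exists x, W.@[ev2 (x, 1)] != 0.
Proof.
move=> hW Wn0; have pn0 : dehom W != 0 by rewrite (dehom_eq0 hW).
pose rs := [seq i%:R | i <- iota 0 (size (dehom W))] : seq K.
have urs : uniq rs.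
  by rewrite map_inj_uniq ?iota_uniq // => i j /eqP; rewrite eqr_nat => /eqP.
have : ~~ all (root (dehom W)) rs.
  apply/negP => al; have := max_poly_roots pn0 al urs.
  by rewrite size_map size_iota ltnn.
by case/allPn => x _ hx; exists x; rewrite meval_dehom.
Qed.

Lemma homog_root_exists W m : W \is m.-homog -> (0 < m)%N ->
  exists t, nonzero_pt t /\ W.@[ev2 t] = 0.
Proof.
move=> hW m0; have [c0|cn0] := eqVneq (dehom W)`_m 0.
  by exists (1, 0); split; [left; exact: oner_neq0 | rewrite (meval_infty hW)].
have sz : size (dehom W) = m.+1.
  apply/eqP; rewrite eqn_leq size_dehom //=.
  by apply: contraR cn0; rewrite -leqNgt => h; rewrite nth_default.
have : size (dehom W) != 1%N by rewrite sz eqSS -lt0n.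
case/closed_rootP => r hr; exists (r, 1); split; first by right; exact: oner_neq0.
by rewrite meval_dehom; apply/eqP.
Qed.

Lemma mon2_X0 : ('X_(@inord 1 0) : P2) = 'X_[mon2 1 0].
Proof.
congr 'X_[_]; apply/mnmP => k; rewrite !mnmE; case: k => [[|[|k]] hk] //=;
  by rewrite -(inj_eq val_inj) /= inordK.
Qed.
Lemma mon2_X1 : ('X_(@inord 1 1) : P2) = 'X_[mon2 0 1].
Proof.
congr 'X_[_]; apply/mnmP => k; rewrite !mnmE; case: k => [[|[|k]] hk] //=;
  by rewrite -(inj_eq val_inj) /= inordK.
Qed.

Lemma lin_at_homog t : lin_at t \is 1.-homog.
Proof.
rewrite /lin_at mon2_X0 mon2_X1.
by apply: rpredB; apply: rpredZ; rewrite dhomogX; apply/eqP; exact: mdeg_mon2.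
Qed.

Lemma prod_lin_at_homog (us : seq (K * K)) :
  \prod_(u <- us) lin_at u \is (size us).-homog.
Proof.
elim: us => [|u us IH]; first by rewrite big_nil; exact: dhomog1.
by rewrite big_cons; exact: (dhomogM (lin_at_homog u) IH).
Qed.

Lemma dehom_lin_at t : dehom (lin_at t) = t.2 *: 'X - t.1%:P.
Proof.
rewrite /lin_at mon2_X0 mon2_X1 dehomB !dehomZ !dehomX !mon2_0.
by rewrite expr0 expr1 alg_polyC.
Qed.

Lemma meval_lin_at t s : (lin_at t).@[ev2 s] = t.2 * s.1 - t.1 * s.2.
Proof. by rewrite /lin_at mon2_X0 mon2_X1 mevalB !mevalZ !meval2X !mon2_0 !mon2_1 /=; ring. Qed.

Lemma meval_lin_at_self t : (lin_at t).@[ev2 t] = 0.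
Proof. by rewrite meval_lin_at mulrC subrr. Qed.

Lemma lin_at_neq0 t : nonzero_pt t -> lin_at t != 0.
Proof.
case=> h; apply/eqP => e.
  have := meval_lin_at t (0, 1); rewrite e meval0 /= => /eqP.
  by rewrite mulr0 mulr1 sub0r eq_sym oppr_eq0 (negbTE h).
have := meval_lin_at t (1, 0); rewrite e meval0 /= => /eqP.
by rewrite mulr0 mulr1 subr0 eq_sym (negbTE h).
Qed.

Definition same_ptb u t : bool := u.1 * t.2 == t.1 * u.2.

Lemma same_ptP u t : reflect (same_pt u t) (same_ptb u t).
Proof. exact: eqP. Qed.

Lemma same_ptb_refl t : same_ptb t t. Proof. by rewrite /same_ptb mulrC. Qed.
Lemma same_ptb_sym u t : same_ptb u t = same_ptb t u.
Proof. by rewrite /same_ptb eq_sym. Qed.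

Lemma same_ptb_trans s t u : nonzero_pt s -> same_ptb t s -> same_ptb s u -> same_ptb t u.
Proof.
rewrite /same_ptb => ns /eqP e1 /eqP e2; have [s20|s2n0] := eqVneq s.2 0.
  have s1 : s.1 != 0 by case: ns => //; rewrite s20 eqxx.
  have t2 : t.2 = 0.
    by apply/eqP; move: e1; rewrite s20 mulr0 => /esym/eqP; rewrite mulf_eq0 (negbTE s1).
  have u2 : u.2 = 0.
    by apply/eqP; move: e2; rewrite s20 mulr0 => /eqP; rewrite mulf_eq0 (negbTE s1).
  by rewrite t2 u2 !mulr0.
apply/eqP; apply: (mulIf s2n0).
transitivity ((t.1 * s.2) * u.2); first ring.
by rewrite e1; transitivity ((s.1 * u.2) * t.2); [ring | rewrite e2; ring].
Qed.

Lemma lin_at_same_pt u t : nonzero_pt u -> nonzero_pt t -> same_ptb u t ->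
  exists2 l : K, l != 0 & lin_at u = l *: lin_at t.
Proof.
move=> nu nt /eqP e; have [t20|t2n0] := eqVneq t.2 0.
  have t1 : t.1 != 0 by case: nt => //; rewrite t20 eqxx.
  have u2 : u.2 = 0.
    by apply/eqP; move: e; rewrite t20 mulr0 => /esym/eqP; rewrite mulf_eq0 (negbTE t1).
  have u1 : u.1 != 0 by case: nu => //; rewrite u2 eqxx.
  exists (u.1 / t.1); first by rewrite mulf_neq0 ?invr_eq0.
  by rewrite /lin_at u2 t20 !scale0r !sub0r scalerN scalerA divfK.
exists (u.2 / t.2).
  rewrite mulf_neq0 ?invr_eq0 //; apply/eqP => u20.
  have u10 : u.1 = 0.
    by apply/eqP; move: e; rewrite u20 mulr0 => /eqP; rewrite mulf_eq0 (negbTE t2n0) orbF.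
  by case: nu; rewrite ?u10 ?u20 eqxx.
rewrite /lin_at scalerBr !scalerA divfK //; congr (_ - _ *: _).
by apply: (mulIf t2n0); rewrite e; field.
Qed.

Lemma dehom_dvd_homog (W L : P2) m q : W \is m.-homog -> L \is 1.-homog ->
  (size q <= m)%N -> dehom W = dehom L * q -> W = L * homog_poly m.-1 q.
Proof.
move=> hW hL; case: m hW => [|m] hW.
  rewrite leqn0 size_poly_eq0 => /eqP -> /eqP; rewrite mulr0 (dehom_eq0 hW).
  by move/eqP ->; rewrite homog_poly0 mulr0.
move=> sq e; apply: (dehom_inj hW); first exact: (dhomogM hL (homog_poly_homog m q)).
by rewrite dehomM dehom_homog_poly.
Qed.

Lemma dehom_root_factor W m t : W \is m.-homog -> nonzero_pt t ->
  W.@[ev2 t] = 0 -> exists2 q : {poly K}, (size q <= m)%N & dehom W = dehom (lin_at t) * q.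
Proof.
move=> hW nt Wt; have sz := size_dehom hW; rewrite dehom_lin_at.
have [t20|t2n0] := eqVneq t.2 0.
  have t1 : t.1 != 0 by case: nt => //; rewrite t20 eqxx.
  exists ((- t.1)^-1 *: dehom W); last first.
    by rewrite t20 scale0r sub0r -polyCN -mul_polyC mulrA -polyCM mulfV ?oppr_eq0 // mul1r.
  have Wm : (dehom W)`_m = 0.
    have tE : t = (t.1 * 1, t.1 * 0) by rewrite mulr1 mulr0 -t20; case: (t).
    move: Wt; rewrite tE (meval_homogZ _ _ _ hW) (meval_infty hW) => /eqP.
    by rewrite mulf_eq0 expf_eq0 (negbTE t1) andbF => /eqP.
  rewrite size_scale ?invr_eq0 ?oppr_eq0 //; apply/leq_sizeP => i.
  rewrite leq_eqVlt => /orP [/eqP <- //|hi].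
  by rewrite nth_default // (leq_trans sz hi).
pose r := t.1 / t.2.
have : root (dehom W) r.
  have tE : t = (t.2 * r, t.2 * 1) by rewrite /r mulr1 mulrC divfK //; case: (t).
  rewrite /root -meval_dehom; move: Wt.
  by rewrite tE (meval_homogZ _ _ _ hW) => /eqP; rewrite mulf_eq0 expf_eq0 (negbTE t2n0) andbF.
case/factor_theorem => q' hq; exists (t.2^-1 *: q').
  have [->|q'n0] := eqVneq q' 0; first by rewrite scaler0 size_poly0.
  by rewrite size_scale ?invr_eq0 //; move: sz; rewrite hq size_Mmonic ?monicXsubC // size_XsubC addn2.
have lE : t.2 *: 'X - t.1%:P = t.2%:P * ('X - r%:P).
  by rewrite mulrBr -mul_polyC -polyCM /r [t.2 * _]mulrC divfK.
by rewrite hq lE -mul_polyC mulrACA -polyCM divff // mul1r mulrC.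
Qed.

Lemma homog_root_factor W m t : W \is m.-homog -> nonzero_pt t ->
  W.@[ev2 t] = 0 -> exists2 C : P2, C \is m.-1.-homog & W = lin_at t * C.
Proof.
move=> hW nt Wt; have [q sq e] := dehom_root_factor hW nt Wt.
exists (homog_poly m.-1 q); first exact: homog_poly_homog.
exact: dehom_dvd_homog (lin_at_homog t) sq e.
Qed.

Lemma homog_factor W m : W \is m.-homog -> W != 0 ->
  exists c (us : seq (K * K)), [/\ c != 0, size us = m,
    forall u, u \in us -> nonzero_pt u &
    W = c%:MP * \prod_(u <- us) lin_at u].
Proof.
elim: m W => [|m IH] W hW Wn0.
  exists (dehom W)`_0, [::]; split => //.
  - by apply: contra Wn0 => /eqP e; rewrite (homog0_polyC hW) e mpolyC0.
  - by rewrite big_nil mulr1; apply: homog0_polyC.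
have [t [nt Wt]] := homog_root_exists hW (ltn0Sn m).
have [C hC WE] := homog_root_factor hW nt Wt.
have Cn0 : C != 0 by apply: contra Wn0 => /eqP C0; rewrite WE C0 mulr0.
have [c [us [cn0 sus nus CE]]] := IH C hC Cn0.
exists c, (t :: us); split => //=; first by rewrite sus.
- by move=> u; rewrite inE => /orP [/eqP ->|]; [exact: nt | exact: nus].
- by rewrite WE CE big_cons mulrCA.
Qed.

Definition exact_ord W t (k : nat) :=
  exists2 W' : P2, W = lin_at t ^+ k * W' & W'.@[ev2 t] != 0.

Lemma root_ord_neq0 W t k : root_ord W t k -> W != 0.
Proof. by move=> [_ nd]; apply/eqP => W0; apply: nd; exists 0; rewrite W0 mul0r. Qed.

Lemma root_ord_le W t j k : root_ord W t k -> mdvd (lin_at t ^+ j) W -> (j <= k)%N.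
Proof.
move=> [_ nd] [C CE]; rewrite leqNgt; apply/negP => h; apply: nd.
by exists (C * lin_at t ^+ (j - k.+1)); rewrite CE -{1}(subnKC h) exprD; ring.
Qed.

Lemma root_ord_uniq W t j k : root_ord W t j -> root_ord W t k -> j = k.
Proof.
move=> rj rk; apply/eqP; rewrite eqn_leq.
by rewrite (root_ord_le rk rj.1) (root_ord_le rj rk.1).
Qed.

Lemma root_ord_same_pt W s t k : nonzero_pt s -> nonzero_pt t -> same_ptb s t ->
  root_ord W t k -> root_ord W s k.
Proof.
move=> ns nt st; have [l ln0 lE] := lin_at_same_pt ns nt st.
have dvdE j : mdvd (lin_at s ^+ j) W <-> mdvd (lin_at t ^+ j) W.
  have lj : l ^+ j != 0 by rewrite expf_neq0.
  rewrite lE exprZn; split=> [[C ->]|[C ->]].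
    by exists (l ^+ j *: C); rewrite scalerCA.
  exists ((l ^+ j)^-1 *: C).
  by rewrite scalerCA scalerA mulVf // scale1r.
by move=> [dk ndk]; split; [apply/dvdE | rewrite dvdE].
Qed.

Lemma mdvdB n (A X Y : {mpoly K[n]}) : mdvd A X -> mdvd A Y -> mdvd A (X - Y).
Proof. by move=> [C ->] [D ->]; exists (C - D); rewrite mulrBl. Qed.

Lemma exact_ord_dvd W t k : exact_ord W t k -> mdvd (lin_at t ^+ k) W.
Proof. by move=> [W' -> _]; exists W'; rewrite mulrC. Qed.

Lemma exact_ord_root_ord W t k : nonzero_pt t -> exact_ord W t k -> root_ord W t k.
Proof.
move=> nt dk; split; first exact: exact_ord_dvd.
case: dk => W' WE W't [C CE]; move: W't; apply/negP; rewrite negbK.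
have e : lin_at t ^+ k * W' = lin_at t ^+ k * (C * lin_at t).
  by rewrite -WE CE exprS; ring.
by rewrite (mulfI (expf_neq0 k (lin_at_neq0 nt)) e) mevalM meval_lin_at_self mulr0.
Qed.

Lemma exact_ord_root W t k : exact_ord W t k -> (W.@[ev2 t] == 0) = (0 < k)%N.
Proof.
move=> [W' -> W't]; rewrite mevalM rmorphXn /= meval_lin_at_self.
by rewrite mulf_eq0 (negbTE W't) orbF expf_eq0 eqxx andbT lt0n.
Qed.

Lemma exact_ord_mul X Y t x y :
  exact_ord X t x -> exact_ord Y t y -> exact_ord (X * Y) t (x + y).
Proof.
move=> [X' -> X't] [Y' -> Y't]; exists (X' * Y'); last by rewrite mevalM mulf_neq0.
by rewrite exprD; ring.
Qed.

Lemma exact_ord_opp W t k : exact_ord W t k -> exact_ord (- W) t k.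
Proof. by move=> [W' -> W't]; exists (- W'); rewrite ?mevalN ?oppr_eq0 ?mulrN. Qed.

Lemma exact_ord_subr X Y t x y :
  exact_ord X t x -> mdvd (lin_at t ^+ y) Y -> (x < y)%N -> exact_ord (X - Y) t x.
Proof.
move=> [X' -> X't] [Y' ->] h; exists (X' - Y' * lin_at t ^+ (y - x)).
  by rewrite -{1}(subnKC (ltnW h)) exprD; ring.
rewrite mevalB mevalM rmorphXn /= meval_lin_at_self expr0n subn_eq0 leqNgt h /=.
by rewrite mulr0 subr0.
Qed.

Lemma exact_ord_lin u t : nonzero_pt u -> nonzero_pt t ->
  exact_ord (lin_at u) t (same_ptb u t).
Proof.
move=> nu nt; case: (boolP (same_ptb u t)) => [ut|nut].
  have [l ln0 ->] := lin_at_same_pt nu nt ut.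
  by exists l%:MP; rewrite ?mevalC // expr1 -mul_mpolyC mulrC.
exists (lin_at u); rewrite ?expr0 ?mul1r // meval_lin_at.
by apply: contra nut; rewrite subr_eq0 => /eqP e; rewrite /same_ptb -e mulrC.
Qed.

Lemma exact_ord_prod c (us : seq (K * K)) t : c != 0 ->
  (forall u, u \in us -> nonzero_pt u) -> nonzero_pt t ->
  exact_ord (c%:MP * \prod_(u <- us) lin_at u) t (count (fun u => same_ptb u t) us).
Proof.
move=> cn0 nus nt; elim: us nus => [|u us IH] nus.
  by rewrite big_nil mulr1; exists c%:MP; rewrite ?expr0 ?mul1r ?mevalC.
rewrite big_cons /= mulrCA; apply: exact_ord_mul.
  by apply: exact_ord_lin => //; apply: nus; rewrite inE eqxx.
by apply: IH => v hv; apply: nus; rewrite inE hv orbT.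
Qed.

Lemma exact_ord_exists W m t : W \is m.-homog -> W != 0 -> nonzero_pt t ->
  exists k, exact_ord W t k.
Proof.
move=> hW Wn0 nt; have [c [us [cn0 _ nus ->]]] := homog_factor hW Wn0.
by exists (count (fun u => same_ptb u t) us); apply: exact_ord_prod.
Qed.

Lemma root_ord_exact_ord W m t k : W \is m.-homog -> nonzero_pt t ->
  root_ord W t k -> exact_ord W t k.
Proof.
move=> hW nt rk; have [j dj] := exact_ord_exists hW (root_ord_neq0 rk) nt.
by rewrite -(root_ord_uniq (exact_ord_root_ord nt dj) rk).
Qed.

Lemma sum_root_ord W m (ts : seq (K * K)) (f : nat -> nat) :
  W \is m.-homog -> W != 0 ->
  (forall i, (i < size ts)%N -> nonzero_pt (nth (0, 0) ts i)) ->
  (forall i j, (i < size ts)%N -> (j < size ts)%N -> i != j ->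
        ~ same_pt (nth (0, 0) ts i) (nth (0, 0) ts j)) ->
  (forall t, nonzero_pt t -> W.@[ev2 t] = 0 ->
         exists2 i, (i < size ts)%N & same_pt t (nth (0, 0) ts i)) ->
  (forall i, (i < size ts)%N -> root_ord W (nth (0, 0) ts i) (f i)) ->
  (\sum_(i < size ts) f i)%N = m.
Proof.
move=> hW Wn0 nts dts cov ro.
have [c [us [cn0 sus nus WE]]] := homog_factor hW Wn0.
have ordW t : nonzero_pt t -> exact_ord W t (count (fun u => same_ptb u t) us).
  by move=> nt; rewrite WE; apply: exact_ord_prod.
have fE (i : 'I_(size ts)) :
    f i = (\sum_(u <- us) same_ptb u (nth (0, 0)%R ts i))%N.
  have nti := nts _ (ltn_ord i).
  rewrite (root_ord_uniq (ro _ (ltn_ord i)) (exact_ord_root_ord nti (ordW _ nti))).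
  by rewrite -sum1_count big_mkcond.
rewrite (eq_bigr _ (fun i _ => fE i)) exchange_big /= -sus -[size us]sum1_size.
rewrite !big_seq; apply: eq_bigr => u hu; have nu := nus u hu.
have Wu : W.@[ev2 u] = 0.
  apply/eqP; rewrite (exact_ord_root (ordW u nu)) -has_count.
  by apply/hasP; exists u => //; apply: same_ptb_refl.
have [i0 hi0 /same_ptP si0] := cov u nu Wu.
rewrite (bigD1 (Ordinal hi0)) //= big1 ?addn0 ?si0 // => j /eqP hj.
case: (boolP (same_ptb _ _)) => // sj; exfalso.
apply: (dts i0 j hi0 (ltn_ord j)); first by apply/eqP => e; apply: hj; apply/val_inj.
by apply/same_ptP; apply: (same_ptb_trans nu); rewrite // same_ptb_sym.
Qed.

Lemma prod_lin_at_sqr (us : seq (K * K)) :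
  (forall u, u \in us -> nonzero_pt u) ->
  (forall t, nonzero_pt t -> ~~ odd (count (fun u => same_ptb u t) us)) ->
  exists l (vs : seq (K * K)), [/\ l != 0, ((size vs).*2 = size us)%N,
    (forall v, v \in vs -> nonzero_pt v) &
    \prod_(u <- us) lin_at u = l%:MP * (\prod_(v <- vs) lin_at v) ^+ 2].
Proof.
have [N] := ubnP (size us); elim: N us => // N IH [|u us] /=.
  by move=> _ _ _; exists 1, [::]; rewrite !big_nil expr1n mulr1 oner_neq0.
rewrite ltnS => hN nus ev.
have nu : nonzero_pt u by apply: nus; rewrite inE eqxx.
have nus' w : w \in us -> nonzero_pt w by move=> hw; apply: nus; rewrite inE hw orbT.
have : odd (count (fun w => same_ptb w u) us).
  by have := ev u nu; rewrite /= same_ptb_refl /= negbK.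
move=> /odd_gt0; rewrite -has_count => /hasP [v hv svu].
have nv := nus' v hv; have [l ln0 lE] := lin_at_same_pt nv nu svu.
have pr : perm_eq us (v :: rem v us) by apply: perm_to_rem.
have nrest w : w \in rem v us -> nonzero_pt w.
  by move=> hw; apply: nus'; rewrite (perm_mem pr) inE hw orbT.
have evr t : nonzero_pt t -> ~~ odd (count (fun w => same_ptb w t) (rem v us)).
  move=> nt; have := ev t nt; rewrite /= (permP pr) /=.
  have -> : same_ptb v t = same_ptb u t.
    apply/idP/idP => h; first by apply: (same_ptb_trans nv); rewrite // same_ptb_sym.
    exact: (same_ptb_trans nu).
  by rewrite !oddD addbA addbb.
have srest : (size (rem v us) < N)%N by rewrite size_rem // (leq_ltn_trans (leq_pred _) hN).
have [l' [vs [l'n0 svs nvs rE]]] := IH _ srest nrest evr.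
exists (l * l'), (u :: vs); split.
- by rewrite mulf_neq0.
- by rewrite /= doubleS svs (perm_size pr).
- by move=> w; rewrite inE => /orP [/eqP ->|]; [exact: nu | exact: nvs].
rewrite big_cons (perm_big _ pr) big_cons rE lE big_cons mpolyCM -mul_mpolyC.
by rewrite /=; ring.
Qed.

Lemma homog_even_ord_sqr W m : W \is m.*2.-homog -> W != 0 ->
  (forall t k, nonzero_pt t -> root_ord W t k -> ~~ odd k) ->
  exists2 S : P2, S \is m.-homog & W = S ^+ 2.
Proof.
move=> hW Wn0 ev; have [c [us [cn0 sus nus WE]]] := homog_factor hW Wn0.
have [|l [vs [ln0 svs nvs prodE]]] := prod_lin_at_sqr nus.
  move=> t nt; apply: (ev t _ nt); apply: (exact_ord_root_ord nt).
  by rewrite WE; apply: exact_ord_prod.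
exists ((sqrtC (c * l))%:MP * \prod_(v <- vs) lin_at v).
  rewrite mul_mpolyC; apply: rpredZ.
  by have := prod_lin_at_homog vs; rewrite (double_inj (etrans svs sus)).
by rewrite WE prodE exprMn -rmorphXn /= sqrtCK mpolyCM; ring.
Qed.

Lemma prod_lin_at_split (us : seq (K * K)) (U V C : P2) mU mV :
  (forall u, u \in us -> nonzero_pt u) -> U \is mU.-homog -> V \is mV.-homog ->
  \prod_(u <- us) lin_at u * C = U * V ->
  exists (F1 F2 a b : P2) e1 e2, [/\ \prod_(u <- us) lin_at u = F1 * F2,
    U = F1 * b, V = F2 * a, F1 \is e1.-homog & F2 \is e2.-homog].
Proof.
elim: us U V C mU mV => [|u us IH] U V C mU mV nus hU hV E.
  by exists 1, 1, V, U, 0%N, 0%N; rewrite ?mul1r ?big_nil ?mulr1 ?dhomog1.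
have nu : nonzero_pt u by apply: nus; rewrite inE eqxx.
have nus' w : w \in us -> nonzero_pt w by move=> hw; apply: nus; rewrite inE hw orbT.
have ln := lin_at_neq0 nu.
have : (U * V).@[ev2 u] = 0 by rewrite -E big_cons !mevalM meval_lin_at_self !mul0r.
move/eqP; rewrite mevalM mulf_eq0 => /orP [/eqP Uu|/eqP Vu].
  have [U' hU' UE] := homog_root_factor hU nu Uu.
  have E' : \prod_(w <- us) lin_at w * C = U' * V.
    by apply: (mulfI ln); move: E; rewrite big_cons UE /= !mulrA.
  have [F1 [F2 [a [b [e1 [e2 [PE UE' VE h1 h2]]]]]]] := IH _ _ _ _ _ nus' hU' hV E'.
  exists (lin_at u * F1), F2, a, b, (1 + e1)%N, e2; split => //.
  - by rewrite big_cons PE /= mulrA.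
  - by rewrite UE UE' mulrA.
  - exact: dhomogM (lin_at_homog u) h1.
have [V' hV' VE] := homog_root_factor hV nu Vu.
have E' : \prod_(w <- us) lin_at w * C = U * V'.
  by apply: (mulfI ln); rewrite mulrA; move: E; rewrite big_cons VE /= => ->; ring.
have [F1 [F2 [a [b [e1 [e2 [PE UE' VE' h1 h2]]]]]]] := IH _ _ _ _ _ nus' hU hV' E'.
exists F1, (lin_at u * F2), a, b, e1, (1 + e2)%N; split => //.
- by rewrite big_cons PE /=; ring.
- by rewrite VE VE' mulrA.
- exact: dhomogM (lin_at_homog u) h2.
Qed.

End BinaryForms.

Section Curves.
Variable K : numClosedFieldType.
Local Notation P2 := {mpoly K[2]}.
Local Notation P3 := {mpoly K[3]}.
Implicit Types (t : K * K) (F G H : P2) (T : seq (nat * nat)).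

Definition ev3 (x y z : K) : 'I_3 -> K :=
  fun i => if val i == 0%N then x else if val i == 1%N then y else z.

Lemma meval_to3 (f : P2) x y z : (to3 f).@[ev3 x y z] = f.@[ev2 (x, y)].
Proof.
rewrite /to3 comp_mpoly_meval; apply: meval_eq => i.
rewrite (tnth_nth 0) /ev2; case: i => [[|[|i]] hi] //=.
- by rewrite /x3 mevalXU /ev3 /= inordK.
- by rewrite /y3 mevalXU /ev3 /= inordK.
Qed.

Lemma meval_z3 x y z : (z3 K).@[ev3 x y z] = z.
Proof. by rewrite /z3 mevalXU /ev3 /= inordK. Qed.

Lemma to3M (f g : P2) : to3 (f * g) = to3 f * to3 g.
Proof. exact: rmorphM. Qed.
Lemma to3D (f g : P2) : to3 (f + g) = to3 f + to3 g.
Proof. exact: raddfD. Qed.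
Lemma to3n (k : nat) : to3 (k%:R : P2) = k%:R.
Proof. exact: rmorph_nat. Qed.

Lemma meval_curve_poly F G H x y z : (curve_poly F G H).@[ev3 x y z] =
  F.@[ev2 (x, y)] * z ^+ 2 + 2%:R * G.@[ev2 (x, y)] * z + H.@[ev2 (x, y)].
Proof.
by rewrite /curve_poly !mevalD !mevalM !meval_to3 meval_z3 rmorph_nat expr2.
Qed.

Lemma msize_le1_meval n (A : {mpoly K[n]}) v w : (msize A <= 1)%N -> A.@[v] = A.@[w].
Proof. by move=> /msize1_polyC ->; rewrite !mevalC. Qed.

Lemma msize_linear_z (F1 a : P2) e : F1 \is e.-homog -> F1 != 0 ->
  (1 < msize (to3 F1 * z3 K + to3 a))%N.
Proof.
move=> hF Fn0; rewrite ltnNge; apply/negP => hA.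
have [x hx] := exists_meval_neq0 hF Fn0.
have := msize_le1_meval (ev3 x 1 1) (ev3 x 1 0) hA.
rewrite !mevalD !mevalM !meval_to3 !meval_z3 mulr1 mulr0 add0r => /eqP.
by rewrite -subr_eq0 addrK (negbTE hx).
Qed.

Lemma mirreducible_no_common_root F G H mF mG mH t :
  F \is mF.-homog -> G \is mG.-homog -> H \is mH.-homog -> F != 0 ->
  mirreducible (curve_poly F G H) -> nonzero_pt t ->
  ~ [/\ F.@[ev2 t] = 0, G.@[ev2 t] = 0 & H.@[ev2 t] = 0].
Proof.
move=> hF hG hH Fn0 [_ irr] nt [Ft Gt Ht].
have [F' _ FE] := homog_root_factor hF nt Ft.
have [G' _ GE] := homog_root_factor hG nt Gt.
have [H' _ HE] := homog_root_factor hH nt Ht.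
pose Q := to3 F' * z3 K ^+ 2 + 2%:R * to3 G' * z3 K + to3 H'.
have PE : curve_poly F G H = to3 (lin_at t) * Q.
  by rewrite /curve_poly /Q FE GE HE !to3M; ring.
case: (irr _ _ PE) => [hl|hQ].
  have e1 := msize_le1_meval (ev3 1 0 0) (ev3 0 0 0) hl.
  have e2 := msize_le1_meval (ev3 0 1 0) (ev3 0 0 0) hl.
  move: e1 e2; rewrite !meval_to3 !meval_lin_at /= !mulr0 !mulr1 !subr0 sub0r.
  move=> e1 /eqP; rewrite oppr_eq0 => /eqP e2.
  by case: nt; rewrite ?e1 ?e2 eqxx.
(* A curve [L * Q] with [Q] constant is independent of [z], which forces [F = 0]. *)
have [x hx] := exists_meval_neq0 hF Fn0.
have ez z : (curve_poly F G H).@[ev3 x 1 z] = (curve_poly F G H).@[ev3 x 1 0].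
  by rewrite PE !mevalM (msize_le1_meval (ev3 x 1 z) (ev3 x 1 0) hQ) !meval_to3.
have E1 := ez 1; have E2 := ez (-1); rewrite !meval_curve_poly in E1 E2.
set f := F.@[_] in E1 E2 hx; set g := G.@[_] in E1 E2; set h := H.@[_] in E1 E2.
have : 2%:R * f = 0.
  transitivity ((f * 1 ^+ 2 + 2%:R * g * 1 + h) - (f * 0 ^+ 2 + 2%:R * g * 0 + h) +
    ((f * (-1) ^+ 2 + 2%:R * g * (-1) + h) - (f * 0 ^+ 2 + 2%:R * g * 0 + h))); first ring.
  by rewrite E1 E2 !subrr addr0.
by move/eqP; rewrite mulf_eq0 pnatr_eq0 /= (negbTE hx).
Qed.

(* If [Delta = S^2] then [F H = (G + S) (G - S)]; distributing the linear factors
   of [F] over the two factors splits the curve as [(F1 z + a) (F2 z + b)]. *)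
Lemma mirreducible_discr_neq_sqr F G H (S : P2) mF m :
  F \is mF.-homog -> F != 0 -> G \is m.-homog -> S \is m.-homog ->
  mirreducible (curve_poly F G H) -> discr F G H != S ^+ 2.
Proof.
move=> hF Fn0 hG hS [_ irr]; apply/eqP => DS.
have FHE : F * H = (G + S) * (G - S).
  apply/eqP; rewrite -subr_eq0; apply/eqP.
  transitivity (S ^+ 2 - discr F G H); first by rewrite /discr; ring.
  by rewrite DS subrr.
have [cF [us [cFn0 _ nus FE]]] := homog_factor hF Fn0.
have E : \prod_(u <- us) lin_at u * (cF%:MP * H) = (G + S) * (G - S).
  by rewrite -FHE FE; ring.
have [F1' [F2 [a [b [e1 [e2 [PE UE VE h1 h2]]]]]]] :=
  prod_lin_at_split nus (rpredD hG hS) (rpredB hG hS) E.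
pose F1 := cF%:MP * F1'; pose b' := (cF^-1)%:MP * b.
have cc : cF%:MP * (cF^-1)%:MP = 1 :> P2 by rewrite -mpolyCM mulfV.
have FE' : F = F1 * F2 by rewrite FE PE /F1; ring.
have UE' : G + S = F1 * b'.
  by rewrite UE /F1 /b' -[F1' * b]mul1r -cc; ring.
have HE : H = a * b' by apply: (mulfI Fn0); rewrite FHE UE' VE FE'; ring.
have GE : 2%:R * G = F1 * b' + F2 * a by rewrite -UE' -VE; ring.
have PE' : curve_poly F G H = (to3 F1 * z3 K + to3 a) * (to3 F2 * z3 K + to3 b').
  have t2G : 2%:R * to3 G = to3 F1 * to3 b' + to3 F2 * to3 a.
    by rewrite -to3n -to3M GE to3D !to3M.
  by rewrite /curve_poly t2G FE' HE !to3M; ring.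
have F1n0 : F1 != 0 by apply: contra Fn0 => /eqP F10; rewrite FE' F10 mul0r.
have F2n0 : F2 != 0 by apply: contra Fn0 => /eqP F20; rewrite FE' F20 mulr0.
have hF1 : F1 \is e1.-homog by rewrite /F1 mul_mpolyC; apply: rpredZ.
case: (irr _ _ PE'); rewrite leqNgt => /negP; apply.
  exact: msize_linear_z hF1 F1n0.
exact: msize_linear_z h2 F2n0.
Qed.

Lemma mult_at_singular_gt0 (P : P3) p m : singular_pt P p -> mult_at P p m -> (0 < m)%N.
Proof.
move=> [_ [Pp _]] [[a [am ha]] _]; rewrite lt0n; apply: contra ha => /eqP m0.
by move: am; rewrite m0 => /eqP; rewrite mdeg_eq0 => /eqP ->; rewrite mderivm0m Pp.
Qed.

(* The order of [Delta = G^2 - F H] at a root [t] of [F] is read off by comparing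
   [ord_t (G^2) = 2 ord_t G] with [ord_t (F H) = ord_t F]. *)
Lemma discr_root_ord_parity F G H mF mG mD t p q :
  F \is mF.-homog -> G \is mG.-homog -> discr F G H \is mD.-homog ->
  nonzero_pt t -> ~ [/\ F.@[ev2 t] = 0, G.@[ev2 t] = 0 & H.@[ev2 t] = 0] ->
  root_ord F t p -> root_ord (discr F G H) t q ->
  (p == q) || ~~ odd (minn p q).
Proof.
move=> hF hG hD nt noroot rp rq.
have ordD k : exact_ord (discr F G H) t k -> k = q.
  by move=> dk; apply: root_ord_uniq (exact_ord_root_ord nt dk) rq.
have {rp} dF := root_ord_exact_ord hF nt rp.
case: (posnP p) => [->|p0]; first by rewrite min0n orbT.
have Ft : F.@[ev2 t] = 0 by apply/eqP; rewrite (exact_ord_root dF).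
have [Gt|Gtn0] := eqVneq G.@[ev2 t] 0; last first.
  have dG2 : exact_ord (G ^+ 2) t 0.
    by exists (G ^+ 2); rewrite ?expr0 ?mul1r // rmorphXn /= expf_neq0.
  have FH : mdvd (lin_at t ^+ p) (F * H).
    by have [C ->] := exact_ord_dvd dF; exists (C * H); ring.
  by rewrite -(ordD 0 (exact_ord_subr dG2 FH p0)) minn0 orbT.
have Htn0 : H.@[ev2 t] != 0 by apply/eqP => Ht; apply: noroot.
have dFH : exact_ord (F * H) t p.
  by rewrite -[p]addn0; apply: exact_ord_mul dF _; exists H; rewrite ?expr0 ?mul1r.
have [G0|Gn0] := eqVneq G 0.
  rewrite -(ordD p) ?eqxx // /discr G0 expr0n /= sub0r.
  exact: exact_ord_opp.
have [g dG] := exact_ord_exists hG Gn0 nt.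
have dG2 : exact_ord (G ^+ 2) t (g + g) by rewrite expr2; apply: exact_ord_mul.
case: (ltngtP (g + g) p) => hgp.
- rewrite -(ordD _ (exact_ord_subr dG2 (exact_ord_dvd dFH) hgp)).
  by rewrite (minn_idPr (ltnW hgp)) addnn odd_double orbT.
- rewrite -(ordD p) ?eqxx // /discr -opprB; apply: exact_ord_opp.
  exact: exact_ord_subr dFH (exact_ord_dvd dG2) hgp.
- have pq : (p <= q)%N.
    apply: root_ord_le rq _; apply: mdvdB (exact_ord_dvd dFH).
    by rewrite -hgp; apply: exact_ord_dvd.
  by rewrite (minn_idPl pq) -hgp addnn odd_double orbT.
Qed.

Lemma two_formula_neq0 F G H T m : F * discr F G H \is m.-homog -> (0 < m)%N ->
  two_formula F G H T -> F != 0 /\ discr F G H != 0.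
Proof.
move=> hFD m0 [ts [_ _ _ cov ro]].
have [t0 [nt0 FDt0]] := homog_root_exists hFD m0.
have [i0 hi0 _] := (cov t0 nt0).1 FDt0.
by have [/root_ord_neq0 -> /root_ord_neq0 ->] := ro i0 hi0.
Qed.

Lemma two_formula_sum F G H T mF mD :
  F \is mF.-homog -> discr F G H \is mD.-homog -> F != 0 -> discr F G H != 0 ->
  two_formula F G H T ->
  (\sum_(pq <- T) pq.1 = mF)%N /\ (\sum_(pq <- T) pq.2 = mD)%N.
Proof.
move=> hF hD Fn0 Dn0 [ts [sizeE nts dts cov ro]].
rewrite !(big_nth (0, 0)%N) !big_mkord -sizeE; split.
  apply: sum_root_ord hF Fn0 nts dts _ (fun i h => (ro i h).1).
  by move=> t nt Ft; apply/(cov t nt); rewrite mevalM Ft mul0r.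
apply: sum_root_ord hD Dn0 nts dts _ (fun i h => (ro i h).2).
by move=> t nt Dt; apply/(cov t nt); rewrite mevalM Dt mulr0.
Qed.

Lemma two_formula_parity F G H T mF mG mD :
  F \is mF.-homog -> G \is mG.-homog -> discr F G H \is mD.-homog ->
  (forall t, nonzero_pt t -> ~ [/\ F.@[ev2 t] = 0, G.@[ev2 t] = 0 & H.@[ev2 t] = 0]) ->
  two_formula F G H T ->
  all (fun pq : nat * nat => (pq.1 == pq.2) || ~~ odd (minn pq.1 pq.2)) T.
Proof.
move=> hF hG hD noroot [ts [sizeE nts _ _ ro]].
apply/(all_nthP (0, 0)%N) => i; rewrite -sizeE => hi.
have [rp rq] := ro i hi.
exact: discr_root_ord_parity hF hG hD (nts i hi) (noroot _ (nts i hi)) rp rq.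
Qed.

Lemma two_formula_root_ord F G H T mD t k : discr F G H \is mD.-homog ->
  two_formula F G H T -> nonzero_pt t -> root_ord (discr F G H) t k -> (0 < k)%N ->
  exists2 i, (i < size T)%N & k = (nth (0, 0)%N T i).2.
Proof.
move=> hD [ts [sizeE nts _ cov ro]] nt rk k0.
have Dt : (discr F G H).@[ev2 t] = 0.
  by apply/eqP; rewrite (exact_ord_root (root_ord_exact_ord hD nt rk)).
have [i hi /same_ptP ti] : exists2 i, (i < size ts)%N & same_pt t (nth (0, 0) ts i).
  by apply/(cov t nt); rewrite mevalM Dt mulr0.
exists i; first by rewrite -sizeE.
by apply: root_ord_uniq rk _; apply: root_ord_same_pt nt (nts i hi) ti (ro i hi).2.
Qed.

Lemma two_formula_has_odd F G H T mF m :
  F \is mF.-homog -> F != 0 -> G \is m.-homog ->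
  discr F G H \is m.*2.-homog -> discr F G H != 0 ->
  mirreducible (curve_poly F G H) -> two_formula F G H T ->
  has (fun pq : nat * nat => odd pq.2) T.
Proof.
move=> hF Fn0 hG hD Dn0 irr tf; apply/negPn/negP => hno.
have [|S hS DS] := homog_even_ord_sqr hD Dn0.
  move=> t k nt rk; case: (posnP k) => [->//|k0].
  have [i hi ->] := two_formula_root_ord hD tf nt rk k0.
  by apply: contra hno => oi; apply/(has_nthP (0, 0)%N); exists i.
by move/eqP: DS; apply/negP; apply: mirreducible_discr_neq_sqr hF Fn0 hG hS irr.
Qed.

End Curves.

Theorem lemma1 (R : realType) (d : nat) (F G H : {mpoly (complex R)[2]})
    (T : seq (nat * nat)) :
  F \is (d - 2)%N.-homog -> G \is (d - 1)%N.-homog -> H \is d.-homog ->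
  mirreducible (curve_poly F G H) ->
  curve_type (curve_poly F G H) d (d - 2) ->
  singular_pt (curve_poly F G H) (Q0 (complex R)) ->
  mult_at (curve_poly F G H) (Q0 (complex R)) (d - 2) ->
  two_formula F G H T ->
  [/\ (\sum_(pq <- T) pq.2 = 2 * \sum_(pq <- T) pq.1 + 2)%N,
      all (fun pq : nat * nat => (pq.1 == pq.2) || ~~ odd (minn pq.1 pq.2)) T &
      has (fun pq : nat * nat => odd pq.2) T].
Proof.
move=> hF hG hH irr _ sing mult tf.
have d3 : (3 <= d)%N by have := mult_at_singular_gt0 sing mult; lia.
have hD : discr F G H \is (d - 1).*2.-homog.
  rewrite -muln2; apply: rpredB; first exact: dhomogMn.
  have -> : ((d - 1) * 2 = d - 2 + d)%N by lia.
  exact: dhomogM.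
have [Fn0 Dn0] := two_formula_neq0 (dhomogM hF hD) (ltac:(lia)) tf.
have [sumF sumD] := two_formula_sum hF hD Fn0 Dn0 tf.
split.
- by rewrite sumF sumD -muln2; lia.
- apply: (two_formula_parity hF hG hD _ tf) => t nt.
  exact: mirreducible_no_common_root hF hG hH Fn0 irr nt.
- exact: two_formula_has_odd hF Fn0 hG hD Dn0 irr tf.
Qed.
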